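(* Let $\lambda_1\ge\lambda_2\ge\dots>0$ with $\lambda_m\to0$, and for $\delta>0$, $d\in\mathbb N$ let $i_d(\delta^2)=\min\{i\in\mathbb N:\lambda_i\lambda_{i+1}\cdots\lambda_{i+d-1}\le\delta^2\}$. Let $n^{\rm ent}(\delta,1)=\#\{m\in\mathbb N:\lambda_m>\delta^2\}$ and $n^{\rm asy}(\epsilon,d)=\#\{k\in\mathbb N^d:k_1<k_2<\dots<k_d,\ \prod_{l=1}^d\lambda_{k_l}>\epsilon^2\}$. Then for every $\epsilon>0$, $n^{\rm asy}(\epsilon,1)=n^{\rm ent}(\epsilon,1)$, and for $d\ge2$ $$n^{\rm asy}(\epsilon,d)=\sum_{l_1=2}^{i_d(\epsilon^2)}\ \sum_{l_2=l_1+1}^{i_{d-1}(\epsilon^2/\lambda_{l_1-1})}\cdots\sum_{l_{d-1}=l_{d-2}+1}^{i_2(\epsilon^2/[\lambda_{l_1-1}\cdots\lambda_{l_{d-2}-1}])}\Big[n^{\rm ent}\big(\epsilon/\sqrt{\lambda_{l_1-1}\cdots\lambda_{l_{d-1}-1}},1\big)-l_{d-1}+1\Big],$$ with empty sums equal to zero.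
   Context: Here $\lambda=(\lambda_m)$ are the squared singular values of a compact linear operator $S_1:H_1\to G_1$, and $n^{\rm asy}(\epsilon,d)$ is the information complexity (absolute error, worst case) of $S_1^{\otimes d}$ restricted to the fully antisymmetric subspace of $H_1^{\otimes d}$ (i.e. $I_d=\{1,\dots,d\}$), and $n^{\rm ent}(\delta,1)$ that of $S_1$ itself. *)

From Stdlib Require Import Reals Lra Lia ZArith List Sorted Classical ClassicalEpsilon.
Import ListNotations.
Open Scope R_scope.

(* Sequences lambda : nat -> R are indexed from 1 (lambda 0 is unused); N = {1,2,...}. *)

(* Cardinality of a (finite) set of elements: the n such that P is enumerated
   by a duplicate-free list of length n (arbitrary if P is infinite). *)
Definition is_card {A : Type} (P : A -> Prop) (n : nat) : Prop :=
  exists l : list A, NoDup l /\ (forall x, In x l <-> P x) /\ length l = n.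

Definition card {A : Type} (P : A -> Prop) : nat :=
  epsilon (inhabits 0%nat) (fun n => is_card P n).

(* Minimum of a set of naturals (arbitrary if empty). *)
Definition nat_min (P : nat -> Prop) : nat :=
  epsilon (inhabits 0%nat) (fun i => P i /\ forall j, P j -> (i <= j)%nat).

Definition prodR (lam : nat -> R) (i d : nat) : R :=
  fold_right Rmult 1 (map lam (seq i d)).

Definition idx (lam : nat -> R) (d : nat) (t : R) : nat :=
  nat_min (fun i => (1 <= i)%nat /\ prodR lam i d <= t).

Definition n_ent (lam : nat -> R) (delta : R) : nat :=
  card (fun m : nat => (1 <= m)%nat /\ lam m > delta ^ 2).

Definition prod_list (lam : nat -> R) (k : list nat) : R :=
  fold_right (fun m acc => lam m * acc) 1 k.

Definition n_asy (lam : nat -> R) (eps : R) (d : nat) : nat :=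
  card (fun k : list nat =>
          length k = d /\ Forall (fun x => (1 <= x)%nat) k /\ Sorted lt k /\
          prod_list lam k > eps ^ 2).

(* sum_{l=a}^{b} f l in Z (empty, i.e. 0, if b < a) *)
Definition zsum (a b : nat) (f : nat -> Z) : Z :=
  fold_right (fun l acc => (f l + acc)%Z) 0%Z (seq a (S b - a)).

(* Nested sum. nest k lo P, with r = k+2 the remaining "dimension" and
   P = lambda_{l_1-1} ... lambda_{l_{j-1}-1} the product so far:
   nest 0 lo P = sum_{l=lo}^{i_2(eps^2/P)} [ n^ent(eps/sqrt(P*lambda_{l-1}),1) - l + 1 ]
   nest (k+1) lo P = sum_{l=lo}^{i_{k+3}(eps^2/P)} nest k (l+1) (P*lambda_{l-1}). *)
Fixpoint nest (lam : nat -> R) (eps : R) (k lo : nat) (P : R) : Z :=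
  match k with
  | O => zsum lo (idx lam 2 (eps ^ 2 / P))
           (fun l => (Z.of_nat (n_ent lam (eps / sqrt (P * lam (l - 1)%nat)))
                      - Z.of_nat l + 1)%Z)
  | S k' => zsum lo (idx lam (k' + 3) (eps ^ 2 / P))
           (fun l => nest lam eps k' (l + 1) (P * lam (l - 1)%nat))
  end.

From Stdlib Require Import Reals ZArith List.
From Stdlib Require Import Sorted Lia Lra Wf_nat Classical ClassicalEpsilon.
Import ListNotations.
Open Scope R_scope.

(** An ascending d-tuple k_1 < ... < k_d of positive indices with
    λ_{k_1}⋯λ_{k_d} > t is the same thing as a first entry k_1 = l-1 followed
    by an ascending (d-1)-tuple with entries ≥ l and product > t/λ_{l-1}.
    Since λ is positive and nonincreasing, the largest product of an ascending
    d-tuple with entries ≥ i is λ_i⋯λ_{i+d-1}; hence a tuple starting at l-1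
    can only exceed t when l-1 < i_d(t).  Splitting on the first entry thus
    writes the count of d-tuples above t as a sum over l ≤ i_d(t) of counts of
    (d-1)-tuples, which is exactly the recursion defining [nest].  At the
    bottom, since λ → 0, the superlevel set {m : λ_m > s} is an initial segment
    {1..N} with N = n^ent, so the 1-tuples with entry ≥ l above s number N-l+1. *)

(** [is_card] determines [card]: two duplicate-free enumerations of the same
    set have the same length. *)
Lemma card_eq {A} (P : A -> Prop) n : is_card P n -> card P = n.
Proof.
  intros H. unfold card.
  assert (H' : is_card P (epsilon (inhabits 0%nat) (fun n => is_card P n)))
    by (apply epsilon_spec; eauto).
  destruct H as [l1 [N1 [M1 <-]]], H' as [l2 [N2 [M2 <-]]].
  apply Nat.le_antisymm; apply NoDup_incl_length; auto;
    intros x Hx; [apply M1, M2 | apply M2, M1]; auto.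
Qed.

Lemma is_card_ext {A} (P Q : A -> Prop) n :
  (forall x, P x <-> Q x) -> is_card P n -> is_card Q n.
Proof.
  intros E [l [N [M L]]]. exists l; repeat split; auto;
    intros Hx; [apply E, M | apply M, E]; auto.
Qed.

Lemma is_card_list {A} (l : list A) : NoDup l -> is_card (fun x => In x l) (length l).
Proof. intros; exists l; repeat split; auto. Qed.

Lemma is_card_cons {A} (c : A) P n :
  is_card P n -> is_card (fun y => exists x, y = c :: x /\ P x) n.
Proof.
  intros [l [N [M L]]]. exists (map (cons c) l). repeat split.
  - apply NoDup_map_NoDup_ForallPairs; auto. intros u v _ _ E; inversion E; auto.
  - intros Hy. apply in_map_iff in Hy. destruct Hy as [z [<- Hz]].
    exists z; split; auto; apply M; auto.
  - intros [z [-> Hz]]. apply in_map, M; auto.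
  - rewrite length_map; auto.
Qed.

Lemma is_card_union {A} (P Q : A -> Prop) n m :
  is_card P n -> is_card Q m -> (forall x, P x -> Q x -> False) ->
  is_card (fun x => P x \/ Q x) (n + m).
Proof.
  intros [l1 [N1 [M1 L1]]] [l2 [N2 [M2 L2]]] D. exists (l1 ++ l2). repeat split.
  - apply NoDup_app; auto. intros a H1 H2. apply (D a); [apply M1 | apply M2]; auto.
  - intros H. apply in_app_or in H. destruct H; [left; apply M1 | right; apply M2]; auto.
  - intros [H|H]; apply in_or_app; [left; apply M1 | right; apply M2]; auto.
  - rewrite length_app; lia.
Qed.

(** Cardinality of a disjoint union indexed by a list, when the cardinalities
    are given as nonnegative integers [f l] (the form in which [zsum] counts). *)
Lemma is_card_disjoint_union {A} (L : list nat) (Q : nat -> A -> Prop) (f : nat -> Z) :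
  NoDup L ->
  (forall l, In l L -> (0 <= f l)%Z /\ is_card (Q l) (Z.to_nat (f l))) ->
  (forall l l' x, In l L -> In l' L -> Q l x -> Q l' x -> l = l') ->
  (0 <= fold_right (fun l acc => (f l + acc)%Z) 0%Z L)%Z /\
  is_card (fun x => exists l, In l L /\ Q l x)
          (Z.to_nat (fold_right (fun l acc => (f l + acc)%Z) 0%Z L)).
Proof.
  induction L as [|a L IH]; intros ND H D.
  - split; [simpl; lia|]. exists []. repeat split; try constructor.
    + intros [].
    + intros [l [[] _]].
  - inversion ND; subst. destruct (H a (or_introl eq_refl)) as [Ha Ca].
    destruct IH as [IH1 IH2]; auto.
    { intros; apply H; right; auto. }
    { intros; eapply D; eauto; right; auto. }
    simpl. split; [lia|]. rewrite Z2Nat.inj_add; auto.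
    eapply is_card_ext; [|apply (is_card_union _ _ _ _ Ca IH2)].
    + intros x; split.
      * intros [Hx|[l [Hl Hx]]]; [exists a | exists l]; simpl; auto.
      * intros [l [[<-|Hl] Hx]]; [left | right; exists l]; auto.
    + intros x Hx [l [Hl Hx']]. assert (a = l) by (eapply D; simpl; eauto).
      subst; contradiction.
Qed.

Lemma Sorted_lt_head (x : nat) r : Sorted lt (x :: r) -> Forall (fun y => (x < y)%nat) r.
Proof. apply Sorted_extends. intros a b c; lia. Qed.

Lemma Sorted_seq a n : Sorted lt (seq a n).
Proof.
  revert a; induction n; intros a; simpl; constructor; auto.
  destruct n; simpl; constructor; lia.
Qed.

Lemma nat_min_spec (P : nat -> Prop) : (exists n, P n) ->
  P (nat_min P) /\ forall j, P j -> (nat_min P <= j)%nat.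
Proof.
  intros Hex. unfold nat_min. apply epsilon_spec.
  destruct (dec_inh_nat_subset_has_unique_least_element P (fun n => classic (P n)) Hex)
    as [x [Hx _]].
  exists x; exact Hx.
Qed.

Section NonincreasingSequence.

Variable lam : nat -> R.
Hypothesis lam_pos : forall m, (1 <= m)%nat -> 0 < lam m.
Hypothesis lam_step : forall m, (1 <= m)%nat -> lam (S m) <= lam m.
Hypothesis lam_lim : Un_cv lam 0.

Lemma lam_antitone m n : (1 <= m <= n)%nat -> lam n <= lam m.
Proof.
  intros Hmn. induction n as [|n IH]; [lia|].
  destruct (Nat.eq_dec m (S n)) as [->|Hne]; [lra|].
  specialize (lam_step n ltac:(lia)). specialize (IH ltac:(lia)). lra.
Qed.

Lemma prodR_S a n : prodR lam a (S n) = lam a * prodR lam (S a) n.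
Proof. reflexivity. Qed.

Lemma prodR_pos n a : (1 <= a)%nat -> 0 < prodR lam a n.
Proof.
  revert a; induction n; intros a Ha.
  - unfold prodR; simpl; lra.
  - rewrite prodR_S. apply Rmult_lt_0_compat; [apply lam_pos; auto | apply IHn; lia].
Qed.

Lemma prod_list_pos r : Forall (fun x => (1 <= x)%nat) r -> 0 < prod_list lam r.
Proof.
  induction r; intros F; simpl; [lra|]. inversion F; subst.
  apply Rmult_lt_0_compat; auto.
Qed.

Lemma prod_list_seq a n : prod_list lam (seq a n) = prodR lam a n.
Proof. revert a; induction n; intros a; [reflexivity|]. simpl. rewrite IHn. reflexivity. Qed.

Lemma prod_list_le_prodR r a : (1 <= a)%nat -> Sorted lt r ->
  Forall (fun x => (a <= x)%nat) r -> prod_list lam r <= prodR lam a (length r).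
Proof.
  revert a; induction r as [|x r IH]; intros a Ha Hs F.
  - unfold prodR; simpl; lra.
  - simpl length. rewrite prodR_S. simpl. inversion F; subst.
    assert (Hr : Forall (fun y => (S a <= y)%nat) r).
    { eapply Forall_impl; [|exact (Sorted_lt_head _ _ Hs)]; simpl; intros; lia. }
    apply Rmult_le_compat.
    + left; apply lam_pos; lia.
    + left; apply prod_list_pos. eapply Forall_impl; [|exact Hr]; simpl; intros; lia.
    + apply lam_antitone; auto.
    + apply IH; [lia | eapply Sorted_inv; eauto | exact Hr].
Qed.

Lemma prodR_antitone a b n : (1 <= a <= b)%nat -> prodR lam b n <= prodR lam a n.
Proof.
  intros Hab. rewrite <- prod_list_seq. rewrite <- (length_seq n b) at 2.
  apply prod_list_le_prodR; [lia | apply Sorted_seq |].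
  apply Forall_forall. intros x Hx; apply in_seq in Hx; lia.
Qed.

(** Since λ → 0 and λ is nonincreasing, {m ≥ 1 : λ_m > s} is {1, ..., N}. *)
Lemma superlevel_initial_segment s : 0 < s ->
  exists N, forall m, ((1 <= m)%nat /\ lam m > s) <-> (1 <= m <= N)%nat.
Proof.
  intros Hs. destruct (lam_lim s Hs) as [M HM].
  assert (Hsmall : forall m, (M <= m)%nat -> (1 <= m)%nat -> ~ lam m > s).
  { intros m Hm _. specialize (HM m Hm). unfold R_dist in HM.
    rewrite Rminus_0_r in HM. apply Rabs_def2 in HM. lra. }
  clear HM. induction M as [|M IH].
  - exists 0%nat. intros m; split; [|lia].
    intros [H1 H]. exfalso; apply (Hsmall m); auto; lia.
  - destruct (classic ((1 <= M)%nat /\ lam M > s)) as [[H1 H2]|Hn].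
    + exists M. intros m; split.
      * intros [Hm1 Hm2]. split; auto. destruct (le_lt_dec m M); auto.
        exfalso; apply (Hsmall m); auto; lia.
      * intros Hm. split; [lia|]. assert (lam M <= lam m) by (apply lam_antitone; lia). lra.
    + apply IH. intros m Hm Hm1. destruct (Nat.eq_dec m M) as [->|]; [|apply Hsmall; auto; lia].
      intros Hc. apply Hn. split; auto.
Qed.

Lemma n_ent_initial_segment delta N :
  (forall m, ((1 <= m)%nat /\ lam m > delta ^ 2) <-> (1 <= m <= N)%nat) ->
  n_ent lam delta = N.
Proof.
  intros HN. unfold n_ent. apply card_eq. rewrite <- (length_seq N 1).
  eapply is_card_ext; [|apply is_card_list, seq_NoDup].
  intros m. rewrite in_seq, HN. lia.
Qed.

(** For t > 0 the products λ_i⋯λ_{i+d-1} eventually drop below t, so i_d(t)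
    is a genuine minimum. *)
Lemma prodR_eventually_small d t : 0 < t -> exists i, (1 <= i)%nat /\ prodR lam i (S d) <= t.
Proof.
  intros Ht. set (C := prodR lam 1 d).
  assert (HC : 0 < C) by (apply prodR_pos; auto).
  destruct (lam_lim (t / C)) as [M HM]; [apply Rdiv_lt_0_compat; auto|].
  set (i := Nat.max M 1). exists i. split; [lia|].
  specialize (HM i ltac:(lia)). unfold R_dist in HM. rewrite Rminus_0_r in HM.
  apply Rabs_def2 in HM. destruct HM as [HM _].
  assert (Htail : prodR lam (S i) d <= C) by (apply prodR_antitone; lia).
  assert (0 < lam i) by (apply lam_pos; lia).
  rewrite prodR_S. apply Rle_trans with (lam i * C); [apply Rmult_le_compat_l; lra|].
  apply Rmult_lt_compat_r with (r := C) in HM; auto.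
  unfold Rdiv in HM. rewrite Rmult_assoc, Rinv_l in HM; lra.
Qed.

Lemma idx_spec d t : 0 < t -> (1 <= d)%nat ->
  (1 <= idx lam d t)%nat /\ prodR lam (idx lam d t) d <= t /\
  forall j, (1 <= j)%nat -> prodR lam j d <= t -> (idx lam d t <= j)%nat.
Proof.
  intros Ht Hd. destruct d as [|d]; [lia|].
  destruct (nat_min_spec _ (prodR_eventually_small d t Ht)) as [[H1 H2] H3].
  split; [exact H1 | split; [exact H2 |]]. intros j Hj Hjt. apply H3; auto.
Qed.

Definition asc (d a : nat) (t : R) (k : list nat) : Prop :=
  length k = d /\ Forall (fun x => (a <= x)%nat) k /\ Sorted lt k /\ prod_list lam k > t.

Lemma n_asy_asc eps d : n_asy lam eps d = card (asc d 1 (eps ^ 2)).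
Proof. reflexivity. Qed.

Lemma lt_div_iff c x t : 0 < c -> (c * x > t <-> x > t / c).
Proof.
  intros Hc. unfold Rdiv. split; intros H.
  - apply Rmult_lt_reg_l with c; auto.
    rewrite <- Rmult_assoc, (Rmult_comm c t), Rmult_assoc, Rinv_r; lra.
  - apply Rmult_lt_compat_l with (r := c) in H; auto.
    rewrite (Rmult_comm t), <- Rmult_assoc, Rinv_r, Rmult_1_l in H; lra.
Qed.

Lemma asc_cons d a t x : (1 <= a)%nat ->
  asc (S d) a t x <-> exists l, (a + 1 <= l)%nat /\
     exists r, x = (l - 1)%nat :: r /\ asc d l (t / lam (l - 1)%nat) r.
Proof.
  intros Ha. split.
  - intros [L [F [So P]]]. destruct x as [|k r]; [discriminate|].
    inversion F; subst. exists (S k). split; [lia|]. exists r.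
    replace (S k - 1)%nat with k by lia. split; auto.
    repeat split; [simpl in L; lia | | eapply Sorted_inv; eauto |].
    + eapply Forall_impl; [|exact (Sorted_lt_head _ _ So)]; simpl; intros; lia.
    + apply lt_div_iff; [apply lam_pos; lia | exact P].
  - intros [l [Hl [r [-> [L [F [So P]]]]]]].
    repeat split; [simpl; lia | | |].
    + constructor; [lia|]. eapply Forall_impl; [|exact F]; simpl; intros; lia.
    + constructor; auto. destruct r; constructor. inversion F; lia.
    + apply lt_div_iff; [apply lam_pos; lia | exact P].
Qed.

Lemma asc_cons_head_bound d i l t r : (1 <= i)%nat -> (i <= l - 1)%nat ->
  prodR lam i (S d) <= t -> ~ asc d l (t / lam (l - 1)%nat) r.
Proof.
  intros Hi Hil Hpt [L [F [So P]]].
  assert (Hk : 0 < lam (l - 1)%nat) by (apply lam_pos; lia).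
  assert (Hr : prod_list lam r <= prodR lam l d)
    by (rewrite <- L; apply prod_list_le_prodR; auto; lia).
  assert (Hmono : prodR lam (l - 1) (S d) <= prodR lam i (S d)) by (apply prodR_antitone; lia).
  rewrite prodR_S in Hmono. replace (S (l - 1)) with l in Hmono by lia.
  apply lt_div_iff in P; auto.
  apply Rmult_le_compat_l with (r := lam (l - 1)%nat) in Hr; lra.
Qed.

Lemma asc_one_card a s N : (1 <= a)%nat ->
  (forall m, ((1 <= m)%nat /\ lam m > s) <-> (1 <= m <= N)%nat) ->
  is_card (asc 1 a s) (N + 1 - a).
Proof.
  intros Ha HN. rewrite <- (length_seq (N + 1 - a) a), <- (length_map (fun m => [m])).
  eapply is_card_ext; [|apply is_card_list].
  - intros x. rewrite in_map_iff. split.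
    + intros [m [<- Hm]]. apply in_seq in Hm.
      destruct (proj2 (HN m) ltac:(lia)) as [_ Hl].
      repeat split; repeat constructor; [lia | simpl; lra].
    + intros [L [F [So P]]]. destruct x as [|m [|]]; try discriminate.
      exists m; split; auto. inversion F; subst. simpl in P.
      destruct (proj1 (HN m) ltac:(split; [lia | lra])). apply in_seq; lia.
  - apply NoDup_map_NoDup_ForallPairs; [|apply seq_NoDup].
    intros u v _ _ E; inversion E; auto.
Qed.

Lemma asc_card_split d lo t b (f : nat -> Z) :
  (2 <= lo)%nat -> (1 <= b)%nat -> prodR lam b (S d) <= t ->
  (forall l, In l (seq lo (S b - lo)) ->
     (0 <= f l)%Z /\ is_card (asc d l (t / lam (l - 1)%nat)) (Z.to_nat (f l))) ->
  (0 <= zsum lo b f)%Z /\ is_card (asc (S d) (lo - 1) t) (Z.to_nat (zsum lo b f)).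
Proof.
  intros Hlo Hb Hbt Hterms.
  destruct (is_card_disjoint_union (seq lo (S b - lo))
     (fun l x => exists r, x = (l - 1)%nat :: r /\ asc d l (t / lam (l - 1)%nat) r) f)
     as [Hnn Hcard].
  - apply seq_NoDup.
  - intros l Hl. destruct (Hterms l Hl) as [H1 H2]. split; auto. apply is_card_cons; auto.
  - intros l l' x Hl Hl' [r [-> _]] [r' [E _]]. apply in_seq in Hl, Hl'. inversion E; lia.
  - split; auto. eapply is_card_ext; [|exact Hcard].
    intros x. rewrite (asc_cons d (lo - 1) t x ltac:(lia)). split.
    + intros [l [Hl Q]]. apply in_seq in Hl. exists l; split; [lia | auto].
    + intros [l [Hl [r [-> Hr]]]]. exists l. split; [|exists r; auto].
      apply in_seq. destruct (le_lt_dec l b); [lia|].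
      exfalso. apply (asc_cons_head_bound d b l t r); auto; lia.
Qed.

Lemma sqr_div_sqrt eps q : 0 < q -> (eps / sqrt q) ^ 2 = eps ^ 2 / q.
Proof.
  intros Hq. assert (Hs : 0 < sqrt q) by (apply sqrt_lt_R0; auto).
  assert (Hss : sqrt q * sqrt q = q) by (apply sqrt_sqrt; lra).
  rewrite <- Hss at 2. field. lra.
Qed.

(** Innermost sum of [nest]: for 2 ≤ l ≤ i_2(t) with t = ε²/P, the pairs with
    first entry l-1 number n^ent(ε/√(P λ_{l-1}),1) - l + 1 ≥ 0. *)
Lemma asc_one_card_n_ent eps P l : 0 < eps -> 0 < P -> (2 <= l)%nat ->
  (l <= idx lam 2 (eps ^ 2 / P))%nat ->
  let n := n_ent lam (eps / sqrt (P * lam (l - 1)%nat)) in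
  (l <= n)%nat /\ is_card (asc 1 l (eps ^ 2 / P / lam (l - 1)%nat)) (n + 1 - l).
Proof.
  intros Heps HP Hl Hidx n.
  set (t := eps ^ 2 / P) in *. set (s := t / lam (l - 1)%nat).
  assert (Ht : 0 < t) by (apply Rdiv_lt_0_compat; auto; apply pow_lt; auto).
  assert (Hk : 0 < lam (l - 1)%nat) by (apply lam_pos; lia).
  destruct (superlevel_initial_segment s) as [N HN]; [apply Rdiv_lt_0_compat; auto|].
  assert (Hn : n = N).
  { apply n_ent_initial_segment. intros m. rewrite <- HN.
    rewrite sqr_div_sqrt by (apply Rmult_lt_0_compat; auto).
    replace (eps ^ 2 / (P * lam (l - 1)%nat)) with s; [tauto | unfold s, t; field; lra]. }
  rewrite Hn. split; [|apply asc_one_card; auto; lia].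
  (* l-1 < i_2(t), so λ_{l-1} λ_l > t, i.e. λ_l > s. *)
  destruct (idx_spec 2 t Ht ltac:(lia)) as [_ [_ Hmin]].
  assert (Hpair : ~ prodR lam (l - 1) 2 <= t).
  { intros C. specialize (Hmin (l - 1)%nat ltac:(lia) C). lia. }
  enough (Hlam : lam l > s) by (apply (proj1 (HN l)); split; [lia | exact Hlam]).
  apply lt_div_iff; auto.
  rewrite prodR_S, prodR_S in Hpair. replace (S (l - 1)) with l in Hpair by lia.
  unfold prodR in Hpair; simpl in Hpair. lra.
Qed.

Lemma asc_card_nest eps k : 0 < eps -> forall lo P, (2 <= lo)%nat -> 0 < P ->
  (0 <= nest lam eps k lo P)%Z /\
  is_card (asc (k + 2) (lo - 1) (eps ^ 2 / P)) (Z.to_nat (nest lam eps k lo P)).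
Proof.
  intros Heps. induction k as [|k IH]; intros lo P Hlo HP.
  all: assert (Ht : 0 < eps ^ 2 / P) by (apply Rdiv_lt_0_compat; auto; apply pow_lt; auto).
  - destruct (idx_spec 2 (eps ^ 2 / P) Ht ltac:(lia)) as [I1 [I2 _]].
    apply asc_card_split; auto.
    intros l Hl. apply in_seq in Hl. cbv beta.
    destruct (asc_one_card_n_ent eps P l Heps HP ltac:(lia) ltac:(lia)) as [Hle Hcard].
    set (n := n_ent lam (eps / sqrt (P * lam (l - 1)%nat))) in *.
    replace (Z.of_nat n - Z.of_nat l + 1)%Z with (Z.of_nat (n + 1 - l)) by lia.
    rewrite Nat2Z.id. split; [lia | exact Hcard].
  - destruct (idx_spec (k + 3) (eps ^ 2 / P) Ht ltac:(lia)) as [I1 [I2 _]].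
    replace (S k + 2)%nat with (S (k + 2)) by lia.
    apply asc_card_split; auto.
    { replace (S (k + 2)) with (k + 3)%nat by lia; auto. }
    intros l Hl. apply in_seq in Hl.
    assert (Hk : 0 < lam (l - 1)%nat) by (apply lam_pos; lia).
    destruct (IH (l + 1)%nat (P * lam (l - 1)%nat) ltac:(lia) ltac:(apply Rmult_lt_0_compat; auto))
      as [J1 J2].
    split; auto. replace (l + 1 - 1)%nat with l in J2 by lia.
    replace (eps ^ 2 / P / lam (l - 1)%nat) with (eps ^ 2 / (P * lam (l - 1)%nat)); auto.
    field; lra.
Qed.

End NonincreasingSequence.

Theorem proposition8 (lam : nat -> R)
  (Hpos : forall m, (1 <= m)%nat -> 0 < lam m)
  (Hdec : forall m, (1 <= m)%nat -> lam (S m) <= lam m)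
  (Hlim : Un_cv lam 0) :
  forall eps : R, 0 < eps ->
    n_asy lam eps 1 = n_ent lam eps /\
    (forall d : nat, (2 <= d)%nat ->
       Z.of_nat (n_asy lam eps d) = nest lam eps (d - 2) 2 1).
Proof.
  intros eps Heps. split.
  - (* d = 1: both sides count the initial segment {λ_m > ε²}. *)
    destruct (superlevel_initial_segment lam Hdec Hlim (eps ^ 2)) as [N HN];
      [apply pow_lt; auto|].
    rewrite n_asy_asc, (n_ent_initial_segment lam eps N HN).
    apply card_eq. replace N with (N + 1 - 1)%nat by lia.
    apply asc_one_card; auto.
  - intros d Hd.
    destruct (asc_card_nest lam Hpos Hdec Hlim eps (d - 2) Heps 2 1 ltac:(lia) ltac:(lra))
      as [Hnn Hcard].
    replace (d - 2 + 2)%nat with d in Hcard by lia.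
    replace (eps ^ 2 / 1) with (eps ^ 2) in Hcard by field.
    replace (2 - 1)%nat with 1%nat in Hcard by lia.
    rewrite n_asy_asc, (card_eq _ _ Hcard). apply Z2Nat.id; auto.
Qed.
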